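(* Let $\epsilon>0$, $k=b/((1+\epsilon)\ln b)$, $b$ sufficiently large, and let $T$ be the complete tree with branching factor $b$ and height $H\ge1$, root $r$. Fix a leaf $z$ and let $w_1$ be the child of $r$ on the path from $r$ to $z$. Let $\sigma$ be a uniformly random proper $k$-coloring of $T$, and let $\mathcal A(\sigma;1,z)$ be the event that no sibling $y$ of $w_1$ (child of $r$ other than $w_1$) satisfies both $\sigma(y)=\sigma(w_1)$ and $y$ frozen in $\sigma$. Then for any colors $c^*\ne c_1$, $\Pr[\mathcal A(\sigma;1,z)\mid \sigma(r)=c^*,\sigma(w_1)=c_1]\le b^{-(1+\epsilon)+\delta}$, where $\delta=(1+\epsilon)/b^{\epsilon}$ if $\epsilon<1$ and $\delta=0$ if $\epsilon\ge1$.
   Context: A vertex $v$ is frozen in $\sigma$ if every proper coloring agreeing with $\sigma$ on the leaves of the subtree rooted at $v$ gives $v$ the color $\sigma(v)$; leaves are always frozen. *)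

From mathcomp Require Import all_boot.
From Stdlib Require Import Reals.
Set Implicit Arguments. Unset Strict Implicit. Unset Printing Implicit Defensive.

(* Vertices of the complete b-ary tree of height H: words over 'I_b of
   length at most H (the root is the empty word; the children of u are the
   words rcons u i). *)
Definition vtx (b H : nat) : finType := {n : 'I_H.+1 & n.-tuple 'I_b}.

Definition word {b H} (v : vtx b H) : seq 'I_b := val (tagged v).
Definition depth {b H} (v : vtx b H) : nat := size (word v).

Definition child {b H} (u v : vtx b H) : bool :=
  (depth u == (depth v).+1) && (take (depth v) (word u) == word v).

Definition is_leaf {b H} (v : vtx b H) : bool := depth v == H.

Definition in_subtree {b H} (v u : vtx b H) : bool :=
  (depth v <= depth u) && (take (depth v) (word u) == word v).

Definition coloring (b H k : nat) := {ffun vtx b H -> 'I_k}.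

Definition proper {b H k} (s : coloring b H k) : bool :=
  [forall u, forall v, child u v ==> (s u != s v)].

Definition proper_on {b H k} (v : vtx b H) (s : coloring b H k) : bool :=
  [forall u, forall w,
     (in_subtree v u && in_subtree v w && child u w) ==> (s u != s w)].

Definition frozen {b H k} (s : coloring b H k) (v : vtx b H) : bool :=
  [forall t : coloring b H k,
     (proper_on v t &&
      [forall u, (in_subtree v u && is_leaf u) ==> (t u == s u)])
     ==> (t v == s v)].

(* event A(s;1,z), where w1 is the child of the root on the path to z *)
Definition eventA {b H k} (w1 : vtx b H) (s : coloring b H k) : bool :=
  ~~ [exists y : vtx b H,
        [&& depth y == 1, y != w1, s y == s w1 & frozen s y]].

(* Conditional probability, for a uniformly random proper coloring s, of
   event E given s r = c and s w1 = c1 (ratio of counts; 0 if the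
   conditioning event is empty). *)
Definition cond_prob {b H k} (E : pred (coloring b H k))
    (r w1 : vtx b H) (c c1 : 'I_k) : R :=
  (INR #|[set s : coloring b H k | [&& proper s, s r == c, s w1 == c1 & E s]]|
   / INR #|[set s : coloring b H k | [&& proper s, s r == c & s w1 == c1]]|)%R.

From Pilot Require Import Defs.
From mathcomp Require Import all_boot.
From Stdlib Require Import Reals Lia Lra.
From mathcomp Require Import zify.

Set Implicit Arguments. Unset Strict Implicit. Unset Printing Implicit Defensive.

(* Write [th] for the [b^-eps] of the paper and [K = k - 1].  A vertex is
   frozen as soon as each color other than its own is the color of a frozen
   child.  Given the color of a vertex, the subtrees of its children are
   colored independently, each child taking each of the [K] allowed colors
   equally often.  Hence if, one level down, a vertex of any prescribed color
   is frozen with probability at least [1 - th], each child avoids "color [c]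
   and frozen" with probability at most [beta = 1 - (1 - th)/K], and the parent
   fails to be frozen with probability at most [K beta^b], which is [<= th] for
   large [b]; by induction on the height this holds at every level.  Given the
   colors of [r] and [w1], the [b - 1] siblings of [w1] independently avoid
   "color of [w1] and frozen" with probability at most [beta], so the event
   has probability at most [beta^(b-1) <= exp (-(b - 1) (1 - th) / K)].
   Probabilities are ratios of counts; independence is a product formula for
   colorings glued from colorings of the children's subtrees. *)

Section RealInequalities.
Local Open Scope R_scope.

Lemma exp_le_compat x y : x <= y -> exp x <= exp y.
Proof. by case=> [/exp_increasing/Rlt_le | ->]; last exact: Rle_refl. Qed.

Lemma pow_le_exp beta u n : 0 <= beta -> beta <= 1 - u -> beta ^ n <= exp (- (INR n * u)).
Proof.
move=> beta_ge0 beta_le.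
have beta_le_exp : beta <= exp (- u) by have := exp_ineq1_le (- u); lra.
apply: Rle_trans (pow_incr _ _ n (conj beta_ge0 beta_le_exp)) _.
elim: n => [|n IHn]; first by rewrite /= Rmult_0_l Ropp_0 exp_0; lra.
rewrite S_INR [exp (- u) ^ _]/= -[X in _ <= X]/(exp _).
have -> : - ((INR n + 1) * u) = - u + - (INR n * u) by ring.
by rewrite exp_plus; apply: Rmult_le_compat_l => //; exact: Rlt_le (exp_pos _).
Qed.

Definition avoid_prob (K th : R) : R := 1 - (1 - th) / K.

Lemma avoid_prob_ge0 K th : 1 <= K -> 0 <= th -> 0 <= avoid_prob K th.
Proof.
move=> K_ge1 th_ge0; rewrite /avoid_prob; suff : (1 - th) / K <= 1 by lra.
apply: (Rmult_le_reg_r K); first lra.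
rewrite /Rdiv Rmult_assoc Rinv_l; lra.
Qed.

Lemma avoid_prob_mulK K th : K <> 0 -> avoid_prob K th * K = K - 1 + th.
Proof. by move=> K_neq0; rewrite /avoid_prob; field. Qed.

Lemma Rdiv_INR_le (m n : nat) (a : R) : (m <= n)%nat -> 0 <= a ->
  INR m <= a * INR n -> INR m / INR n <= a.
Proof.
case: n => [|n] m_le a_ge0 m_bound.
  by rewrite leqn0 in m_le; rewrite (eqP m_le) /= /Rdiv Rmult_0_l.
have n_gt0 : 0 < INR n.+1 by apply: lt_0_INR; lia.
apply: (Rmult_le_reg_r (INR n.+1)) => //.
by rewrite /Rdiv Rmult_assoc Rinv_l ?Rmult_1_r //; lra.
Qed.

Lemma ln_eventually_gt (A : R) :
  exists n0 : nat, forall n : nat, (n0 <= n)%nat -> 0 < INR n /\ A < ln (INR n).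
Proof.
have [n0 n0_gt] := INR_unbounded (exp A); exists n0 => n n0_le.
have n_gt : exp A < INR n.
  by apply: Rlt_le_trans (Rgt_lt _ _ n0_gt) _; apply: le_INR; apply/leP.
split; first by apply: Rlt_trans n_gt; exact: exp_pos.
by rewrite -[A]ln_exp; apply: ln_increasing => //; exact: exp_pos.
Qed.

Lemma INR_pred_mul_le (k : nat) (x y : R) : (1 <= k)%nat -> 0 < y ->
  INR k <= x / y -> INR (k - 1) * y <= x - y.
Proof.
move=> k_ge1 y_gt0 k_le; rewrite minus_INR /=; last by apply/leP.
have : INR k * y <= x by move/(Rmult_le_compat_r y): k_le; rewrite /Rdiv Rmult_assoc Rinv_l; lra.
lra.
Qed.

Lemma INR_expn m n : INR (expn m n) = INR m ^ n.
Proof. by elim: n => [// | n IHn]; rewrite expnS mult_INR IHn. Qed.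

Lemma INR_prod_le_pow (I : finType) (P : pred I) (f : I -> nat) (a : R) :
  0 <= a -> (forall i, P i -> INR (f i) <= a) ->
  INR (\prod_(i | P i) f i) <= a ^ #|P|.
Proof.
move=> a_ge0 f_le; rewrite -sum1_card.
apply: (big_rec2 (fun m e => INR m <= a ^ e)) => [/= | i m e Pi IH]; first lra.
rewrite mult_INR /=; apply: Rmult_le_compat => //; [exact: pos_INR | exact: pos_INR | exact: f_le].
Qed.

Lemma INR_sum_le (I : finType) (P : pred I) (f : I -> nat) (a : R) :
  (forall i, P i -> INR (f i) <= a) -> INR (\sum_(i | P i) f i) <= INR #|P| * a.
Proof.
move=> f_le; rewrite -sum1_card.
apply: (big_rec2 (fun m e => INR m <= INR e * a)) => [/= | i m e Pi IH]; first lra.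
by rewrite !plus_INR /=; have := f_le i Pi; lra.
Qed.

Lemma INR_pred_ge1 k (c x : 'I_k) : c != x -> 1 <= INR (k - 1).
Proof.
move=> /eqP c_neq_x; apply: (le_INR 1); apply/leP.
have : (c : nat) <> x by move=> /val_inj.
by have := ltn_ord c; have := ltn_ord x; lia.
Qed.

Section ThetaBounds.

Variables (eps L K : R) (n : nat).
Hypotheses (eps_gt0 : 0 < eps) (expL : exp L = INR n) (L_gt3 : 3 < L)
  (L_large : 2 / eps * ln (2 * (1 + eps) / eps) < L) (K_ge1 : 1 <= K)
  (K_small : K * ((1 + eps) * L) <= INR n - (1 + eps) * L).

(* Since [exp L = n], [th] is [n^-eps]. *)
Local Notation th := (exp (- (eps * L))).

(* With E = exp (eps L / 2) we have E > eps L / 2 and eps E > 2 (1 + eps),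
   hence eps E^2 > (1 + eps) eps L. *)
Lemma theta_mul_le1 : (1 + eps) * L * th <= 1.
Proof.
pose E := exp (eps * L / 2).
have thE : th * (E * E) = 1.
  by rewrite /E -!exp_plus -exp_0; f_equal; field.
have E_gt : L * eps / 2 < E by have := exp_ineq1_le (eps * L / 2); rewrite -/E; lra.
have epsE_gt : 2 * (1 + eps) < eps * E.
  have lnE : ln (2 * (1 + eps) / eps) < eps * L / 2.
    apply: (Rmult_lt_reg_l (2 / eps)); first by apply: Rdiv_lt_0_compat; lra.
    by have -> : 2 / eps * (eps * L / 2) = L by field; lra.
  have := exp_increasing _ _ lnE; rewrite exp_ln -/E; last by apply: Rdiv_lt_0_compat; lra.
  move/(Rmult_lt_compat_l eps _ _ eps_gt0).
  by have -> : eps * (2 * (1 + eps) / eps) = 2 * (1 + eps) by field; lra.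
have : (1 + eps) * L < E * E by apply: (Rmult_lt_reg_l eps) => //; nra.
have := exp_pos (- (eps * L)); nra.
Qed.

Lemma theta_le1 : th <= 1.
Proof. rewrite -exp_0; apply: exp_le_compat; nra. Qed.

Let K_gt0 : 0 < K. Proof. lra. Qed.
Let th_gt0 : 0 < th. Proof. exact: exp_pos. Qed.
Let aL_gt3 : 3 < (1 + eps) * L. Proof. nra. Qed.
Let n_gt0 : 0 < INR n. Proof. rewrite -expL; exact: exp_pos. Qed.

Lemma avoid_prob_le_exp m :
  avoid_prob K th ^ m <= exp (- (INR m * ((1 - th) / K))).
Proof. by apply: pow_le_exp; [apply: avoid_prob_ge0; lra | rewrite /avoid_prob; lra]. Qed.

Lemma theta_fixed_point : K * (K - 1 + th) ^ n <= th * K ^ n.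
Proof.
rewrite -(avoid_prob_mulK th (Rgt_not_eq _ _ K_gt0)) Rpow_mult_distr -Rmult_assoc.
apply: Rmult_le_compat_r; first by apply: pow_le; lra.
have L_th := theta_mul_le1.
have decay : INR n * ((1 - th) / K) >= (1 + eps) * L * (1 - th).
  have uK : (1 - th) / K * K = 1 - th by field; lra.
  have u_ge0 : 0 <= (1 - th) / K.
    by apply: Rmult_le_pos; [have := theta_le1; lra | apply: Rlt_le; apply: Rinv_0_lt_compat].
  set u := (1 - th) / K in uK u_ge0 *; rewrite -uK.
  have gap : 0 <= u * (INR n - K * ((1 + eps) * L)) by apply: Rmult_le_pos; lra.
  lra.
have eL : exp (- ((1 + eps) * L)) * INR n = th.
  by rewrite -expL -exp_plus; f_equal; ring.
have three : exp ((1 + eps) * L * th) <= 3 by apply: Rle_trans exp_le_3; apply: exp_le_compat.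
set e := exp (- ((1 + eps) * L)) in eL *.
have e_gt0 : 0 < e by exact: exp_pos.
have pow_le : avoid_prob K th ^ n <= 3 * e.
  apply: Rle_trans (avoid_prob_le_exp n) _; apply: Rle_trans (_ : _ <= e * exp ((1 + eps) * L * th)) _.
    by rewrite -exp_plus; apply: exp_le_compat; lra.
  by rewrite Rmult_comm; apply: Rmult_le_compat_r; lra.
have K_le : 3 * K <= INR n by nra.
nra.
Qed.

Lemma avoid_prob_pow_le :
  avoid_prob K th ^ (n - 1) <=
  exp ((- (1 + eps) + (if Rlt_dec eps 1 then (1 + eps) / exp (eps * L) else 0)) * L).
Proof.
have n_ge1 : (1 <= n)%coq_nat.
  by case: n n_gt0 => [|m] /=; [lra | lia].
apply: Rle_trans (avoid_prob_le_exp _) _; apply: exp_le_compat.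
have uK : (1 - th) / K * K = 1 - th by field; lra.
have u_ge0 : 0 <= (1 - th) / K.
  by apply: Rmult_le_pos; [have := theta_le1; lra | apply: Rlt_le; apply: Rinv_0_lt_compat].
set u := (1 - th) / K in uK u_ge0 *; clearbody u.
have Ku : (1 + eps) * L * K <= INR n - 1 by nra.
rewrite (minus_INR _ _ n_ge1); case: (Rlt_dec eps 1) => [eps_lt1 | eps_ge1] /=.
- have -> : (1 + eps) / exp (eps * L) = (1 + eps) * th by rewrite exp_Ropp.
  have gap : 0 <= u * ((INR n - 1) - (1 + eps) * L * K) by apply: Rmult_le_pos; lra.
  nra.
- have th_n : th * INR n <= 1.
    by rewrite -expL -exp_plus -exp_0; apply: exp_le_compat; nra.
  have nuK : (INR n - 1) * (u * K) = (INR n - 1) * (1 - th) by rewrite uK.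
  have gap : 0 <= (INR n - 1) * u - (1 + eps) * L.
    by apply: (Rmult_le_reg_l K) => //; lra.
  nra.
Qed.

End ThetaBounds.

End RealInequalities.

Definition vtx_of_word b H (s : seq 'I_b) (s_sz : size s < H.+1) : vtx b H :=
  @existT 'I_H.+1 (fun n => n.-tuple 'I_b) (Ordinal s_sz) (in_tuple s).

(* The [i]-th child of [v]; junk value [v] when [v] is a leaf. *)
Definition child_at b H (v : vtx b H) (i : 'I_b) : vtx b H :=
  match @idP (size (rcons (word v) i) < H.+1) with
  | ReflectT s_sz => vtx_of_word s_sz
  | ReflectF _ => v
  end.

Section Tree.

Variables b H : nat.
Implicit Types (r u v w y : vtx b H) (i : 'I_b).

Lemma depth_le_height v : depth v <= H.
Proof. by case: v => [[n n_lt] t]; rewrite /depth /word /= size_tuple -ltnS. Qed.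

Lemma word_inj : injective (@word b H).
Proof.
case=> [[n n_lt] [s s_sz]] [[m m_lt] [s' s'_sz]]; rewrite /word /= => eq_s; subst s'.
have eq_nm : n = m := etrans (esym (eqP s_sz)) (eqP s'_sz); subst m.
by rewrite (bool_irrelevance n_lt m_lt) (bool_irrelevance s_sz s'_sz).
Qed.

Lemma word_child_at v i : depth v < H -> word (child_at v i) = rcons (word v) i.
Proof.
move=> v_int; rewrite /child_at.
destruct (@idP (size (rcons (word v) i) < H.+1)) as [fits | too_big]; first by [].
by case: too_big; rewrite size_rcons ltnS.
Qed.

Lemma depth_child_at v i : depth v < H -> depth (child_at v i) = (depth v).+1.
Proof. by move=> v_int; rewrite /depth word_child_at // size_rcons. Qed.

Lemma child_at_inj v : depth v < H -> injective (child_at v).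
Proof.
move=> v_int i j /(congr1 word); rewrite !word_child_at // => /eqP.
by rewrite eqseq_rcons eqxx => /eqP.
Qed.

Lemma in_subtreeP v w : reflect (exists s, word w = word v ++ s) (in_subtree v w).
Proof.
apply: (iffP andP) => [[_ /eqP <-] | [s E]].
  by exists (drop (depth v) (word w)); rewrite cat_take_drop.
by rewrite /depth E size_cat take_size_cat ?leq_addr.
Qed.

Lemma childP u v : reflect (exists i, word u = rcons (word v) i) (child u v).
Proof.
apply: (iffP andP) => [[/eqP sz_u /eqP take_u] | [i E]]; last first.
  by rewrite /depth E size_rcons -cats1 take_size_cat.
have : size (drop (depth v) (word u)) = 1 by rewrite size_drop -/(depth u) sz_u subSnn.
move: (cat_take_drop (depth v) (word u)); rewrite take_u.
by case: (drop _ _) => [|i []] // <- _; exists i; rewrite cats1.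
Qed.

Lemma in_subtree_refl v : in_subtree v v.
Proof. by apply/in_subtreeP; exists [::]; rewrite cats0. Qed.

Lemma in_subtree_trans u v w : in_subtree u v -> in_subtree v w -> in_subtree u w.
Proof.
move=> /in_subtreeP [s1 E1] /in_subtreeP [s2 E2]; apply/in_subtreeP.
by exists (s1 ++ s2); rewrite E2 E1 catA.
Qed.

Lemma child_in_subtree u v : child u v -> in_subtree v u.
Proof. by move=> /childP [i E]; apply/in_subtreeP; exists [:: i]; rewrite E cats1. Qed.

Lemma child_at_child v i : depth v < H -> child (child_at v i) v.
Proof. by move=> v_int; apply/childP; exists i; rewrite word_child_at. Qed.

Lemma child_child_at u v : child u v -> exists i, depth v < H /\ u = child_at v i.
Proof.
move=> /childP [i E].
have v_int : depth v < H by have := depth_le_height u; rewrite /depth E size_rcons.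
by exists i; split => //; apply: word_inj; rewrite word_child_at.
Qed.

Definition branch v w : option 'I_b := ohead (drop (depth v) (word w)).

Lemma in_subtree_child_at v w : in_subtree v w -> w != v ->
  exists i, [/\ depth v < H, branch v w = Some i & in_subtree (child_at v i) w].
Proof.
move=> /in_subtreeP [[|i s] E] w_neq_v.
  by rewrite cats0 in E; rewrite (word_inj E) eqxx in w_neq_v.
have v_int : depth v < H.
  by have := depth_le_height w; rewrite /depth E size_cat /=; lia.
exists i; split => //; first by rewrite /branch E /depth drop_size_cat.
by apply/in_subtreeP; exists s; rewrite word_child_at // E cat_rcons.
Qed.

Lemma child_at_subtree v w i : depth v < H -> in_subtree (child_at v i) w ->
  [/\ in_subtree v w, w != v & branch v w = Some i].
Proof.
move=> v_int /in_subtreeP [s]; rewrite word_child_at // => E; split.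
- by apply/in_subtreeP; exists (i :: s); rewrite E cat_rcons.
- by apply/eqP => w_eq; have := congr1 size E; rewrite w_eq size_cat size_rcons; lia.
- by rewrite /branch E /depth -cats1 -catA drop_size_cat.
Qed.

Lemma subtree_leaf v w : depth v = H -> in_subtree v w -> w = v.
Proof.
move=> v_leaf /in_subtreeP [[|i s] E]; apply: word_inj; first by rewrite E cats0.
by have := depth_le_height w; rewrite /depth E size_cat -/(depth v) v_leaf /= addnS ltnNge leq_addr.
Qed.

Lemma root_subtree r w : depth r = 0 -> in_subtree r w.
Proof. by move/size0nil => r_nil; apply/in_subtreeP; exists (word w); rewrite r_nil. Qed.

Lemma depth1_child_at r y : depth r = 0 -> depth y = 1 ->
  exists i, depth r < H /\ y = child_at r i.
Proof.
move=> /size0nil r_nil y1; apply: child_child_at; apply/childP.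
by move: y1; rewrite /depth r_nil; case: (word y) => [|i []] //= _; exists i.
Qed.

End Tree.

Section Colorings.

Variables b H k : nat.
Implicit Types (r u v w : vtx b H) (i : 'I_b) (s t : coloring b H k).

Lemma proper_onP v t :
  reflect (forall u w, in_subtree v u -> in_subtree v w -> child u w -> t u != t w)
          (proper_on v t).
Proof.
apply: (iffP forallP) => [t_prop u w vu vw uw | t_prop u].
  by have /forallP /(_ w) := t_prop u; rewrite vu vw uw.
by apply/forallP => w; apply/implyP => /andP [/andP [vu vw] uw]; exact: t_prop.
Qed.

Lemma proper_on_subtree u v t : in_subtree v u -> proper_on v t -> proper_on u t.
Proof.
move=> vu /proper_onP t_prop; apply/proper_onP => w w' uw uw'.
by apply: t_prop; apply: in_subtree_trans vu _.
Qed.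

Lemma eq_proper_on v s t : (forall w, in_subtree v w -> s w = t w) ->
  proper_on v s = proper_on v t.
Proof.
move=> eq_st; apply/proper_onP/proper_onP => st_prop u w vu vw uw.
  by rewrite -!eq_st //; apply: st_prop.
by rewrite !eq_st //; apply: st_prop.
Qed.

Lemma proper_root r t : depth r = 0 -> Defs.proper t = proper_on r t.
Proof. by move=> r0; apply: eq_forallb => u; apply: eq_forallb => w; rewrite !root_subtree. Qed.

Definition glue v (x : 'I_k) (f : 'I_b -> coloring b H k) s : coloring b H k :=
  [ffun w => if w == v then x else if in_subtree v w then
     (if branch v w is Some i then f i w else s w) else s w].

Lemma glue_root v x f s : glue v x f s v = x.
Proof. by rewrite ffunE eqxx. Qed.

Lemma glue_out v w x f s : ~~ in_subtree v w -> glue v x f s w = s w.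
Proof.
move=> vw; rewrite ffunE (negbTE vw); case: eqP => // w_eq.
by rewrite w_eq in_subtree_refl in vw.
Qed.

Lemma glue_child v w x f s i : depth v < H -> in_subtree (child_at v i) w ->
  glue v x f s w = f i w.
Proof.
by move=> v_int /(child_at_subtree v_int) [vw w_neq_v br]; rewrite ffunE (negbTE w_neq_v) vw br.
Qed.

Lemma proper_on_glue v x f s : depth v < H ->
  (forall i, proper_on (child_at v i) (f i)) -> (forall i, f i (child_at v i) != x) ->
  proper_on v (glue v x f s).
Proof.
move=> v_int f_prop f_root; apply/proper_onP => u w vu vw uw.
have [w_eq | w_neq_v] := eqVneq w v.
  rewrite w_eq in uw *; have [i [_ ->]] := child_child_at uw.
  by rewrite glue_root (glue_child _ _ _ v_int (in_subtree_refl _)).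
have [i [_ _ iw]] := in_subtree_child_at vw w_neq_v.
have iu := in_subtree_trans iw (child_in_subtree uw).
rewrite (glue_child _ _ _ v_int iu) (glue_child _ _ _ v_int iw).
by move/proper_onP: (f_prop i); apply.
Qed.

Definition agree_on_leaves v s t : bool :=
  [forall u, (in_subtree v u && is_leaf u) ==> (s u == t u)].

Lemma frozenE s v :
  frozen s v = [forall t, (proper_on v t && agree_on_leaves v t s) ==> (t v == s v)].
Proof. by []. Qed.

Lemma eq_frozen v s t : (forall w, in_subtree v w -> s w = t w) -> frozen s v = frozen t v.
Proof.
move=> eq_st; rewrite !frozenE; apply: eq_forallb => t'.
rewrite -eq_st ?in_subtree_refl //; congr ((_ && _) ==> _).
by apply: eq_forallb => u; case: (boolP (in_subtree v u)) => //= vu; rewrite eq_st.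
Qed.

Lemma frozen_leaf s v : is_leaf v -> frozen s v.
Proof.
move=> v_leaf; rewrite frozenE; apply/forallP => t; apply/implyP => /andP [_ /forallP /(_ v)].
by rewrite in_subtree_refl v_leaf.
Qed.

(* A proper recoloring of [T_v] keeping the leaves would give [v] a color
   [c], but [T_v] has a child frozen at [c]. *)
Lemma frozen_children s v : depth v < H ->
  [forall c, (c != s v) ==> [exists i, (s (child_at v i) == c) && frozen s (child_at v i)]] ->
  frozen s v.
Proof.
move=> v_int /forallP children; rewrite frozenE; apply/forallP => t.
apply/implyP => /andP [t_prop t_leaves]; apply/negPn/negP => t_neq.
have /existsP [i /andP [/eqP s_i i_frozen]] := implyP (children (t v)) t_neq.
have iv := child_at_child i v_int; have vi := child_in_subtree iv.
move: i_frozen; rewrite frozenE => /forallP /(_ t) /implyP.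
rewrite (proper_on_subtree vi t_prop) /=.
have -> : agree_on_leaves (child_at v i) t s.
  apply/forallP => u; apply/implyP => /andP [iu u_leaf].
  by move/forallP: t_leaves => /(_ u); rewrite (in_subtree_trans vi iu) u_leaf.
move=> /(_ isT) /eqP; rewrite s_i => t_i.
by move/proper_onP: t_prop => /(_ _ _ vi (in_subtree_refl v) iv); rewrite t_i eqxx.
Qed.

End Colorings.

Lemma card_family_ord (T : finType) n (B : 'I_n -> {set T}) :
  #|(family_mem (fun i => mem (B i)) : simpl_pred {ffun 'I_n -> T})| = \prod_(i < n) #|B i|.
Proof. by rewrite card_family foldrE big_map big_enum. Qed.

Lemma card_partition_by (T I : finType) (A : {set T}) (p : T -> I) (P : pred I) :
  #|[set t in A | P (p t)]| = \sum_(y | P y) #|[set t in A | p t == y]|.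
Proof.
rewrite -sum1_card (partition_big p P); last by move=> t; rewrite inE => /andP [].
apply: eq_bigr => y Py; rewrite -sum1_card; apply: eq_bigl => t.
by rewrite !inE; case: (t \in A); case: eqP => [-> | ]; rewrite ?Py ?andbT ?andbF.
Qed.

Lemma card_bigcup_le (T J : finType) (P : pred J) (B : J -> {set T}) :
  #|\bigcup_(j | P j) B j| <= \sum_(j | P j) #|B j|.
Proof.
elim/big_rec2: _ => [|j n U _ le_U]; first by rewrite cards0.
by rewrite (leq_trans (leq_card_setU _ _).1) ?leq_add2l.
Qed.

(* The number of proper [k]-colorings of a complete [b]-ary tree of height
   [h] with a prescribed root color. *)
Fixpoint nproper (k b h : nat) : nat :=
  if h is h'.+1 then expn ((k - 1) * nproper k b h') b else 1.

Section SubtreeColorings.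

Variables (b H k : nat) (d0 : 'I_k).
Implicit Types (u v w : vtx b H) (i : 'I_b) (s t : coloring b H k) (x : 'I_k).

(* Colorings of [T_v] are encoded as colorings of the whole tree that are
   constantly [d0] off [T_v]. *)
Definition const_off v t : bool := [forall w, ~~ in_subtree v w ==> (t w == d0)].

Definition restrict v t : coloring b H k := [ffun w => if in_subtree v w then t w else d0].

Lemma const_off_root r t : depth r = 0 -> const_off r t.
Proof. by move=> r0; apply/forallP => w; rewrite root_subtree. Qed.

Lemma const_off_restrict v t : const_off v (restrict v t).
Proof. by apply/forallP => w; apply/implyP => vw; rewrite ffunE (negbTE vw). Qed.

Lemma restrict_subtree v t w : in_subtree v w -> restrict v t w = t w.
Proof. by move=> vw; rewrite ffunE vw. Qed.

Lemma const_off_children_eq v s t : depth v < H ->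
  const_off v s -> const_off v t -> s v = t v ->
  (forall i w, in_subtree (child_at v i) w -> s w = t w) -> s = t.
Proof.
move=> v_int /forallP s_off /forallP t_off st_v st_children; apply/ffunP => w.
have [-> // | w_neq_v] := eqVneq w v.
have [vw | vw] := boolP (in_subtree v w).
  by have [i [_ _ iw]] := in_subtree_child_at vw w_neq_v; exact: st_children iw.
by move: (s_off w) (t_off w); rewrite vw => /eqP -> /eqP ->.
Qed.

(* Gluing is a bijection between the proper colorings of [T_v] with root
   color [x] and the families of proper colorings of the children's subtrees
   with root colors other than [x]. *)
Lemma card_colorings_children v x (Q : 'I_b -> pred (coloring b H k)) :
  depth v < H ->
  (forall i s t, (forall w, in_subtree (child_at v i) w -> s w = t w) -> Q i s = Q i t) ->
  #|[set t | [&& const_off v t, proper_on v t, t v == x & [forall i, Q i t]]]| =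
  \prod_(i < b) #|[set t | [&& const_off (child_at v i) t, proper_on (child_at v i) t,
                              t (child_at v i) != x & Q i t]]|.
Proof.
move=> v_int Q_local.
set A := [set t | _].
pose split_children t : {ffun 'I_b -> coloring b H k} := [ffun i => restrict (child_at v i) t].
rewrite -(@card_in_imset _ _ split_children A); last first.
  move=> s t; rewrite !inE => /and4P [s_off _ /eqP s_v _] /and4P [t_off _ /eqP t_v _] st.
  apply: (const_off_children_eq v_int s_off t_off); first by rewrite s_v t_v.
  move=> i w iw; have := congr1 (fun g : {ffun 'I_b -> coloring b H k} => g i w) st; rewrite /= !ffunE.
  by rewrite iw.
rewrite -card_family_ord; apply: eq_card => g.
apply/imsetP/familyP => [[t] | g_children].
  rewrite inE => /and4P [t_off t_prop /eqP t_v /forallP t_Q] -> i.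
  have iv := child_at_child i v_int; have vi := child_in_subtree iv.
  rewrite inE ffunE const_off_restrict restrict_subtree ?in_subtree_refl //=.
  rewrite (eq_proper_on (t := t)) ?(proper_on_subtree vi t_prop); last exact: restrict_subtree.
  rewrite (Q_local i _ t) ?t_Q ?andbT; last exact: restrict_subtree.
  by rewrite -t_v; move/proper_onP: t_prop; apply => //; exact: in_subtree_refl.
have {}g_children i : [&& const_off (child_at v i) (g i), proper_on (child_at v i) (g i),
                          g i (child_at v i) != x & Q i (g i)].
  by have := g_children i; rewrite inE.
exists (glue v x g [ffun _ => d0]).
  rewrite inE; apply/and4P; split.
  - by apply/forallP => w; apply/implyP => vw; rewrite glue_out // ffunE.
  - by apply: proper_on_glue => // i; case/and4P: (g_children i).
  - by rewrite glue_root.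
  - apply/forallP => i; rewrite (Q_local i _ (g i)); first by case/and4P: (g_children i).
    by move=> w iw; rewrite (glue_child _ _ _ v_int iw).
apply/ffunP => i; apply/ffunP => w; rewrite ffunE.
have [iw | iw] := boolP (in_subtree (child_at v i) w).
  by rewrite restrict_subtree // (glue_child _ _ _ v_int iw).
rewrite ffunE (negbTE iw).
by case/and4P: (g_children i) => /forallP /(_ w); rewrite iw => /eqP ->.
Qed.

Definition colorings_at v x : {set coloring b H k} :=
  [set t | [&& const_off v t, proper_on v t & t v == x]].

Definition frozen_at v x : {set coloring b H k} :=
  [set t | [&& const_off v t, proper_on v t, t v == x & frozen t v]].

Lemma card_colorings_at_leaf v x : depth v = H -> #|colorings_at v x| = 1.
Proof.
move=> v_leaf; apply: (@eq_card1 _ [ffun w => if w == v then x else d0]) => t.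
rewrite inE; apply/and3P/eqP => [[/forallP t_off _ /eqP t_v] | ->].
  apply/ffunP => w; rewrite ffunE; have [-> // | w_neq_v] := eqVneq w v.
  have [vw | vw] := boolP (in_subtree v w); first by rewrite (subtree_leaf v_leaf vw) eqxx in w_neq_v.
  by apply/eqP; move: (t_off w); rewrite vw.
split; last by rewrite ffunE eqxx.
  apply/forallP => w; apply/implyP => vw; rewrite ffunE.
  by case: (eqVneq w v) => [w_eq | //]; rewrite w_eq in_subtree_refl in vw.
apply/proper_onP => u w vu vw; rewrite (subtree_leaf v_leaf vu) (subtree_leaf v_leaf vw).
by case/andP => /eqP; lia.
Qed.

Lemma frozen_at_leaf v x : depth v = H -> frozen_at v x = colorings_at v x.
Proof. by move=> v_leaf; apply/setP => t; rewrite !inE frozen_leaf ?andbT // /is_leaf v_leaf. Qed.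

Lemma card_colorings_neq u x n : (forall y, #|colorings_at u y| = n) ->
  #|[set t | [&& const_off u t, proper_on u t & t u != x]]| = (k - 1) * n.
Proof.
move=> card_u.
have -> : [set t | [&& const_off u t, proper_on u t & t u != x]] =
          [set t in [set t | const_off u t && proper_on u t] | (fun y => y != x) (t u)].
  by apply/setP => t; rewrite !inE andbA.
rewrite (card_partition_by _ (fun t : coloring b H k => t u) (fun y => y != x)).
rewrite (eq_bigr (fun _ => n)); last first.
  by move=> y _; rewrite -(card_u y); apply: eq_card => t; rewrite !inE andbA.
by rewrite sum_nat_const cardC1 card_ord subn1.
Qed.

Lemma card_colorings_at h v x : depth v + h = H -> #|colorings_at v x| = nproper k b h.
Proof.
elim: h v x => [|h IHh] v x v_depth; first by rewrite card_colorings_at_leaf //; rewrite addn0 in v_depth.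
have v_int : depth v < H by lia.
have -> : nproper k b h.+1 = \prod_(i < b) ((k - 1) * nproper k b h).
  by rewrite prod_nat_const card_ord.
transitivity #|[set t | [&& const_off v t, proper_on v t, t v == x & [forall i : 'I_b, true]]]|.
  apply: eq_card => t; rewrite !inE.
  have -> : [forall i : 'I_b, true] by apply/forallP.
  by rewrite andbT.
rewrite card_colorings_children //; apply: eq_bigr => i _.
rewrite -(@card_colorings_neq (child_at v i) x (nproper k b h)); last first.
  by move=> y; apply: IHh; rewrite depth_child_at //; lia.
by apply: eq_card => t; rewrite !inE andbT.
Qed.

Definition avoid_frozen u x c : {set coloring b H k} :=
  [set t | [&& const_off u t, proper_on u t, t u != x & ~~ ((t u == c) && frozen t u)]].

Lemma card_avoid_frozen u x c h : c != x -> depth u + h = H ->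
  #|avoid_frozen u x c| + #|frozen_at u c| = (k - 1) * nproper k b h.
Proof.
move=> c_neq_x u_depth.
rewrite -(@card_colorings_neq u x (nproper k b h)); last by move=> y; apply: card_colorings_at.
rewrite -(cardID [pred t : coloring b H k | (t u == c) && frozen t u]) addnC.
congr (_ + _); apply: eq_card => t; rewrite !inE /=; last by rewrite [RHS]andbC !andbA.
have [-> | t_neq_c] := eqVneq (t u) c; last by rewrite /= !andbF.
by rewrite c_neq_x /= andbT andbA.
Qed.

Section FrozenBound.
Local Open Scope R_scope.

Variable th : R.
Let K := INR (k - 1).

Lemma avoid_frozen_le u x c h : c != x -> (depth u + h = H)%nat ->
  (1 - th) * INR (nproper k b h) <= INR #|frozen_at u c| ->
  INR #|avoid_frozen u x c| <= (K - 1 + th) * INR (nproper k b h).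
Proof.
move=> c_neq_x u_depth frozen_ge.
have := congr1 INR (card_avoid_frozen c_neq_x u_depth).
rewrite plus_INR mult_INR -/K; lra.
Qed.

(* A coloring not frozen at [v] misses, for some color [c] other than [x],
   a child frozen at [c]; for each [c] this leaves a product of [b]
   independent per-child events. *)
Lemma card_not_frozen_le v x h : (depth v + h.+1 = H)%nat -> 0 <= th ->
  (forall i c, c != x ->
     (1 - th) * INR (nproper k b h) <= INR #|frozen_at (child_at v i) c|) ->
  INR #|[set t | [&& const_off v t, proper_on v t, t v == x & ~~ frozen t v]]| <=
  K * ((K - 1 + th) * INR (nproper k b h)) ^ b.
Proof.
move=> v_depth th_ge0 frozen_ge.
have v_int : (depth v < H)%nat by lia.
have i_depth i : (depth (child_at v i) + h = H)%nat by rewrite depth_child_at //; lia.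
pose miss c := [set t | [&& const_off v t, proper_on v t, t v == x &
   [forall i, ~~ ((t (child_at v i) == c) && frozen t (child_at v i))]]].
have card_miss c : c != x -> INR #|miss c| <= ((K - 1 + th) * INR (nproper k b h)) ^ b.
  move=> c_neq_x; rewrite card_colorings_children //; last first.
    by move=> i s t st; rewrite st ?in_subtree_refl // (eq_frozen st).
  rewrite -[b in _ ^ b]card_ord.
  apply: INR_prod_le_pow => [|i _].
    apply: Rmult_le_pos; last exact: pos_INR.
    by have := INR_pred_ge1 c_neq_x; rewrite -/K; lra.
  exact: avoid_frozen_le (frozen_ge i c c_neq_x).
apply: Rle_trans (_ : INR #|\bigcup_(c | c != x) miss c| <= _).
  apply/le_INR/leP/subset_leq_card/subsetP => t.
  rewrite inE => /and4P [t_off t_prop t_v /(contra (frozen_children v_int))].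
  rewrite negb_forall => /existsP [c]; rewrite negb_imply (eqP t_v) => /andP [c_neq /existsPn no_child].
  apply/bigcupP; exists c => //; rewrite inE t_off t_prop t_v; apply/forallP => i; exact: no_child.
apply: Rle_trans (_ : INR (\sum_(c | c != x) #|miss c|) <= _).
  exact/le_INR/leP/card_bigcup_le.
by apply: Rle_trans (INR_sum_le card_miss) _; rewrite cardC1 card_ord -subn1; right.
Qed.

Lemma card_frozen_at_ge h v x : (depth v + h = H)%nat -> 0 <= th ->
  K * (K - 1 + th) ^ b <= th * K ^ b ->
  (1 - th) * INR (nproper k b h) <= INR #|frozen_at v x|.
Proof.
move=> v_depth th_ge0 fixed_point; elim: h v x v_depth => [|h IHh] v x v_depth.
  rewrite addn0 in v_depth; rewrite frozen_at_leaf // card_colorings_at_leaf //=; lra.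
have frozen_split : (#|frozen_at v x| +
    #|[set t | [&& const_off v t, proper_on v t, t v == x & ~~ frozen t v]]| =
    nproper k b h.+1)%nat.
  rewrite -(card_colorings_at x v_depth) -(cardID [pred t | frozen t v] (colorings_at v x)).
  by congr addn; apply: eq_card => t; rewrite !inE /= ?[~~ _ && _]andbC !andbA.
have children_frozen i c : c != x ->
    (1 - th) * INR (nproper k b h) <= INR #|frozen_at (child_at v i) c|.
  by move=> _; apply: IHh; rewrite depth_child_at //; lia.
have := card_not_frozen_le v_depth th_ge0 children_frozen.
have := congr1 INR frozen_split; rewrite plus_INR /= INR_expn mult_INR -/K.
have pn_ge0 := pow_le _ b (pos_INR (nproper k b h)).
have := Rmult_le_compat_r _ _ _ pn_ge0 fixed_point.
rewrite !Rpow_mult_distr; lra.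
Qed.

End FrozenBound.

End SubtreeColorings.

Section RootEvent.

Variables (b H k : nat) (r : vtx b H) (i1 : 'I_b) (c c1 : 'I_k).
Hypotheses (r_root : depth r = 0) (r_int : depth r < H) (c_neq_c1 : c != c1).
Implicit Types (i : 'I_b) (s t : coloring b H k).

Local Notation w1 := (child_at r i1).

Lemma eventA_children s :
  (s w1 == c1) && eventA w1 s =
  [forall i, if i == i1 then s (child_at r i) == c1
             else ~~ ((s (child_at r i) == c1) && frozen s (child_at r i))].
Proof.
apply/andP/forallP => [[/eqP s_w1 /existsPn no_sibling] i | children].
  have [-> | i_neq] := eqVneq i i1; first by rewrite s_w1.
  have := no_sibling (child_at r i); rewrite depth_child_at // r_root eqxx -s_w1 /=.
  by rewrite (inj_eq (child_at_inj r_int)) i_neq.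
have := children i1; rewrite eqxx => s_w1; split => //.
apply/existsPn => y; apply/negP => /and4P [/eqP y1 y_neq /eqP s_y y_frozen].
have [i [_ y_eq]] := depth1_child_at r_root y1; rewrite y_eq in y_neq s_y y_frozen.
have i_neq : i != i1 by apply: contraNneq y_neq => ->.
by have := children i; rewrite (negbTE i_neq) s_y (eqP s_w1) eqxx y_frozen.
Qed.

Lemma root_colorings (P : pred (coloring b H k)) :
  [set s | [&& Defs.proper s, s r == c & P s]] =
  [set t | [&& const_off c r t, proper_on r t, t r == c & P t]].
Proof. by apply/setP => s; rewrite !inE const_off_root // (proper_root _ r_root). Qed.

Local Notation pn := (nproper k b (H - 1)).
Let i_depth i : (depth (child_at r i) + (H - 1) = H)%nat.
Proof. by rewrite depth_child_at // r_root; lia. Qed.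

Lemma card_child_colored :
  #|[set t | [&& const_off c w1 t, proper_on w1 t, t w1 != c & t w1 == c1]]| = pn.
Proof.
rewrite -(card_colorings_at c c1 (i_depth i1)); apply: eq_card => t; rewrite !inE /=.
have [-> | _] := eqVneq (t w1) c1; last by rewrite !andbF.
by rewrite (eq_sym c1) c_neq_c1.
Qed.

Lemma card_root_child_colored :
  #|[set s | [&& Defs.proper s, s r == c & s w1 == c1]]| = pn * expn ((k - 1) * pn) (b - 1).
Proof.
transitivity #|[set s | [&& Defs.proper s, s r == c & [forall i, (i == i1) ==> (s (child_at r i) == c1)]]]|.
  apply: eq_card => s; rewrite !inE; congr [&& _, _ & _].
  by apply/idP/forallP => [s_w1 i | /(_ i1)]; [apply/implyP => /eqP -> | rewrite eqxx].
rewrite root_colorings card_colorings_children //; last by move=> i s t st; rewrite st ?in_subtree_refl.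
rewrite (bigD1 i1) //= eqxx; congr muln.
  by rewrite -card_child_colored; apply: eq_card => t; rewrite !inE.
rewrite (eq_bigr (fun=> (k - 1) * pn)) => [|i i_neq].
  by rewrite prod_nat_const cardC1 card_ord -subn1.
rewrite -(@card_colorings_neq _ _ _ c (child_at r i) c pn); last by move=> y; apply: card_colorings_at.
by apply: eq_card => t; rewrite !inE (negbTE i_neq) andbT.
Qed.

Section EventBound.
Local Open Scope R_scope.

Variable th : R.
Hypotheses (th_ge0 : 0 <= th)
  (fixed_point : INR (k - 1) * (INR (k - 1) - 1 + th) ^ b <= th * INR (k - 1) ^ b).
Local Notation K := (INR (k - 1)).

Lemma card_eventA_le :
  INR #|[set s | [&& Defs.proper s, s r == c, s w1 == c1 & eventA w1 s]]| <=
  INR pn * ((K - 1 + th) * INR pn) ^ (b - 1).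
Proof.
pose Q i s := if i == i1 then s (child_at r i) == c1
              else ~~ ((s (child_at r i) == c1) && frozen s (child_at r i)).
have -> : [set s | [&& Defs.proper s, s r == c, s w1 == c1 & eventA w1 s]] =
          [set s | [&& Defs.proper s, s r == c & [forall i, Q i s]]].
  by apply/setP => s; rewrite !inE -eventA_children.
rewrite root_colorings card_colorings_children //; last first.
  by move=> i s t st; rewrite /Q st ?in_subtree_refl // (eq_frozen st).
rewrite (bigD1 i1) //= {1}/Q eqxx card_child_colored mult_INR.
apply: Rmult_le_compat_l; first exact: pos_INR.
have card_siblings : #|[pred i : 'I_b | i != i1]| = (b - 1)%nat by rewrite cardC1 card_ord subn1.
rewrite -card_siblings; apply: INR_prod_le_pow => [|i i_neq].
  apply: Rmult_le_pos; last exact: pos_INR.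
  by have := INR_pred_ge1 c_neq_c1; lra.
have -> : #|[set t | [&& const_off c (child_at r i) t, proper_on (child_at r i) t,
    t (child_at r i) != c & Q i t]]| = #|avoid_frozen c (child_at r i) c c1|.
  by apply: eq_card => t; rewrite /Q (negbTE i_neq).
apply: (avoid_frozen_le _ (i_depth i)); first by rewrite eq_sym.
exact: card_frozen_at_ge.
Qed.

Lemma cond_prob_eventA_le :
  cond_prob (eventA w1) r w1 c c1 <= avoid_prob K th ^ (b - 1).
Proof.
have K_ge1 := INR_pred_ge1 c_neq_c1.
apply: Rdiv_INR_le.
- by apply/subset_leq_card/subsetP => s; rewrite !inE => /and4P [-> -> ->].
- by apply: pow_le; apply: avoid_prob_ge0.
rewrite card_root_child_colored mult_INR INR_expn mult_INR.
apply: Rle_trans card_eventA_le _; right.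
rewrite -(avoid_prob_mulK th (_ : K <> 0)); last lra.
by rewrite !Rpow_mult_distr; ring.
Qed.

End EventBound.

End RootEvent.

Theorem lemma9 (eps : R) : (0 < eps)%R ->
  exists b0 : nat, forall (b k H : nat),
    (b0 <= b)%N ->
    (* k = b / ((1+eps) ln b), rounded down to an integer *)
    (INR k <= INR b / ((1 + eps) * ln (INR b)) < INR k + 1)%R ->
    (1 <= H)%N ->
    forall (r z w1 : vtx b H),
      depth r = 0%N -> is_leaf z ->
      depth w1 = 1%N -> word w1 = take 1 (word z) ->
      forall c c1 : 'I_k, c != c1 ->
        (cond_prob (eventA w1) r w1 c c1 <=
         Rpower (INR b)
           (- (1 + eps) + (if Rlt_dec eps 1
                           then (1 + eps) / Rpower (INR b) eps else 0)))%R.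
Proof.
move=> eps_gt0.
have [b0 b0_large] := ln_eventually_gt (Rmax 3 (2 / eps * ln (2 * (1 + eps) / eps))).
exists b0 => b k H b_ge [k_le _] _ r _ w1 r_root _ w1_depth _ c c1 c_neq_c1.
have [b_gt0 L_large] := b0_large b b_ge.
have [L_gt3 L_gt] : (3 < ln (INR b) /\ 2 / eps * ln (2 * (1 + eps) / eps) < ln (INR b))%R.
  by split; apply: Rle_lt_trans L_large; [apply: Rmax_l | apply: Rmax_r].
have [i1 [r_int ->]] := depth1_child_at r_root w1_depth.
have k_ge1 : (0 < k)%N := leq_ltn_trans (leq0n c) (ltn_ord c).
have aL_gt0 : (0 < (1 + eps) * ln (INR b))%R by apply: Rmult_lt_0_compat; lra.
have K_small := INR_pred_mul_le k_ge1 aL_gt0 k_le.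
have K_ge1 := INR_pred_ge1 c_neq_c1.
have expL := exp_ln _ b_gt0.
apply: Rle_trans (cond_prob_eventA_le i1 r_root r_int c_neq_c1 (th := exp (- (eps * ln (INR b)))) _ _) _.
- exact: Rlt_le (exp_pos _).
- exact: theta_fixed_point eps_gt0 expL L_gt3 L_gt K_ge1 K_small.
by rewrite /Rpower; apply: avoid_prob_pow_le eps_gt0 expL L_gt3 K_ge1 K_small.
Qed.
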